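(* Any protocol $P$ among $n$ players that achieves sender anonymity against a single malicious player (no collusions), where the only resources available are pairwise shared secret key bits, a reliable broadcast channel and public communication, uses at least $n$ bits of pairwise shared key.
   Context: The key-sharing graph of the protocol is the undirected graph $G=(V,E)$ whose nodes are the players, with an edge between nodes $i$ and $j$ iff $i$ and $j$ share one bit of secret key; the number of pairwise shared key bits is $|E|$. Sender anonymity: for an adversary corrupting a set of $t$ players not including the sender $s$ and observing all communication $C$ and the randomness $G^t$ of the corrupted players, $\max_S\Pr[S=s\mid G^t,C]=\max_S\Pr[S=s]=1/(n-t)$, maximum over random variables $S$ depending only on $C$ and $G^t$. *)

From mathcomp Require Import all_boot all_order all_algebra.
Set Implicit Arguments.
Unset Strict Implicit.
Unset Printing Implicit Defensive.
Import Order.TTheory GRing.Theory Num.Theory.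
Local Open Scope ring_scope.

(* Model of a broadcast protocol among n players 'I_n whose only resources are
   pairwise shared secret key bits and a public reliable broadcast channel.
   - Key bits are indexed by 'I_nkeys; key bit e is shared between the two
     players [ends e] (so the key-sharing (multi)graph has nkeys edges).
   - The protocol runs for [rounds] rounds; in every round every player
     broadcasts a symbol of [alph], computed deterministically from its
     identity, the public history of previous rounds, its own input
     (Some m if it is the sender with message m, None otherwise) and the key
     bits it knows (its key view: the bits on its incident edges). *)
Unset Implicit Arguments.
Record protocol (n : nat) (M : Type) := Protocol {
  nkeys : nat;
  ends : 'I_nkeys -> 'I_n * 'I_n;
  alph : Type;
  rounds : nat;
  next : 'I_n -> seq ('I_n -> alph) -> option M ->
         {ffun 'I_nkeys -> option bool} -> alph
}.
Set Implicit Arguments.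
Arguments nkeys {n M}.
Arguments ends {n M}.
Arguments alph {n M}.
Arguments rounds {n M}.
Arguments next {n M}.

Section Protocol.
Variables (n : nat) (M : Type) (P : protocol n M).

Definition keys := {ffun 'I_(nkeys P) -> bool}.

Definition key_graph_ok : Prop := forall e, (ends P e).1 != (ends P e).2.

Definition key_view (i : 'I_n) (k : keys) : {ffun 'I_(nkeys P) -> option bool} :=
  [ffun e => if (i == (ends P e).1) || (i == (ends P e).2)
             then Some (k e) else None].

Definition input (s : 'I_n) (m : M) (i : 'I_n) : option M :=
  if i == s then Some m else None.

Fixpoint run (s : 'I_n) (m : M) (k : keys) (r : nat) : seq ('I_n -> alph P) :=
  match r with
  | 0 => [::]
  | r'.+1 => let h := run s m k r' in
             rcons h (fun i => next P i h (input s m i) (key_view i k))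
  end.

Definition transcript (s : 'I_n) (m : M) (k : keys) := run s m k (rounds P).

Definition correct : Prop :=
  exists dec : seq ('I_n -> alph P) -> M,
    forall s m k, dec (transcript s m k) = m.

(* Probability that the adversary corrupting player j, guessing the sender by
   S (a function of the communication C and of its key bits G^j), is right,
   when the sender is uniform among the n-1 other players, the message is m
   and the keys are uniform. *)
Definition guess_success (j : 'I_n) (m : M)
    (S : seq ('I_n -> alph P) -> {ffun 'I_(nkeys P) -> option bool} -> 'I_n) : rat :=
  (#|[set sk : 'I_n * keys | (sk.1 != j) &&
        (S (transcript sk.1 m sk.2) (key_view j sk.2) == sk.1)]|)%:R%R
  / (n.-1 * 2 ^ nkeys P)%:R.

Definition sender_anonymous_1 : Prop :=
  forall (j : 'I_n) (m : M),
    (forall S, guess_success j m S <= (n.-1)%:R^-1) /\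
    (exists S, guess_success j m S = (n.-1)%:R^-1).

End Protocol.

From Pilot Require Import Defs.
From mathcomp Require Import all_boot all_order all_algebra.
From mathcomp Require Import zify.
From Stdlib Require Import Classical ClassicalEpsilon FunctionalExtensionality.
Set Implicit Arguments. Unset Strict Implicit. Unset Printing Implicit Defensive.
Import Order.TTheory GRing.Theory Num.Theory.

(* If there are fewer key bits than players, the key graph has a player s of
   degree at most 1, and then some other player j knows every key bit of s.
   Corrupting j, the adversary can recompute what s would broadcast as a
   non-sender and check it against the transcript. Whenever another player t
   is the sender the check succeeds; by correctness it fails for some message
   and keys when s is the sender (otherwise the transcript would not depend on
   the message). Guessing t on success and s on failure is right on all
   2^|E| key assignments with sender t and on at least one with sender s,
   which beats the bound 1/(n-1). *)

Lemma exists_notin (T : finType) (A : {set T}) : #|A| < #|T| -> exists x, x \notin A.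
Proof.
move=> ltA; have : 0 < #|~: A| by rewrite -(ltn_add2l #|A|) addn0 cardsC.
by case/card_gt0P=> x; rewrite inE; exists x.
Qed.

Section KeyGraph.
Variables (n k : nat) (ends : 'I_k -> 'I_n * 'I_n).
Hypothesis loopless : forall e, (ends e).1 != (ends e).2.

Definition incident (i : 'I_n) (e : 'I_k) : bool :=
  (i == (ends e).1) || (i == (ends e).2).

Definition degree (i : 'I_n) : nat := \sum_(e < k) incident i e.

Lemma sum_degree : \sum_(i < n) degree i = k.*2.
Proof.
rewrite /degree exchange_big /= -muln2 -[k in k * 2]card_ord -sum_nat_const.
apply: eq_bigr => e _; have ne := loopless e.
rewrite (bigD1 (ends e).1) // (bigD1 (ends e).2) /=; last by rewrite eq_sym.
rewrite /incident !eqxx orbT big1 // => i /andP[n1 n2].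
by rewrite (negbTE n1) (negbTE n2).
Qed.

Lemma exists_degree_lt2 : k < n -> exists s, degree s < 2.
Proof.
move=> ltkn; apply/existsP; apply: contraLR ltkn; rewrite negb_exists => /forallP deg2.
have : \sum_(i < n) 2 <= \sum_(i < n) degree i by apply: leq_sum => i _; rewrite leqNgt deg2.
rewrite sum_degree sum_nat_const card_ord; lia.
Qed.

Lemma exists_dominated_vertex : k < n -> 1 < n ->
  exists s j, s != j /\ forall e, incident s e -> incident j e.
Proof.
move=> ltkn n_gt1; have [s deg_s] := exists_degree_lt2 ltkn.
case: (pickP (incident s)) => [e se | isolated]; last first.
  have [|j] := @exists_notin _ [set s]; first by rewrite cards1 card_ord.
  by rewrite in_set1 eq_sym => js; exists s, j; split => // e; rewrite isolated.
pose j := if s == (ends e).1 then (ends e).2 else (ends e).1.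
have je : incident j e by rewrite /incident /j; case: ifP; rewrite eqxx ?orbT.
exists s, j; split.
  move: se (loopless e); rewrite /incident /j.
  by case: eqVneq => [->|_] //= /eqP ->; rewrite eq_sym.
move=> e' se'; case: (eqVneq e' e) => [-> //|ne'].
move: deg_s; rewrite /degree (bigD1 e) // (bigD1 e') /=; last by rewrite ne'.
by rewrite se se'; lia.
Qed.

End KeyGraph.

Section Protocol.
Variables (n : nat) (M : Type) (P : protocol n M).
Local Notation history := (seq ('I_n -> alph P)).
Local Notation view := {ffun 'I_(nkeys P) -> option bool}.

Definition silent_consistent (s : 'I_n) (h : history) (v : view) : Prop :=
  forall x0 r, r < size h -> nth x0 h r s = Defs.next P s (take r h) None v.

Lemma silent_consistent_rcons s h x v :
  silent_consistent s (rcons h x) v <->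
  silent_consistent s h v /\ x s = Defs.next P s h None v.
Proof.
rewrite /silent_consistent size_rcons -cats1; split.
- move=> cons; split.
    move=> x0 r ltr; have := cons x0 r (ltnW ltr).
    by rewrite nth_cat ltr takel_cat // ltnW.
  by have := cons x (size h) (ltnSn _); rewrite nth_cat ltnn subnn take_size_cat.
- case=> cons xs x0 r; rewrite ltnS leq_eqVlt => /orP[/eqP ->|ltr].
    by rewrite nth_cat ltnn subnn take_size_cat.
  by rewrite nth_cat ltr takel_cat ?cons // ltnW.
Qed.

Lemma run_silent_consistent t m k r s :
  s != t -> silent_consistent s (run t m k r) (key_view s k).
Proof.
move=> st; elim: r => [|r IH] /=; first by move=> x0 r; rewrite ltn0.
by apply/silent_consistent_rcons; split; rewrite // /input (negbTE st).
Qed.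

(* Players other than s have no input when s sends, so the messages m1, m2
   only enter through s. *)
Lemma run_silent_consistent_eq s m1 m2 k r :
  silent_consistent s (run s m1 k r) (key_view s k) ->
  silent_consistent s (run s m2 k r) (key_view s k) ->
  run s m1 k r = run s m2 k r.
Proof.
elim: r => [|r IH] //= /silent_consistent_rcons[cons1 xs1]
                      /silent_consistent_rcons[cons2 xs2].
have eqh := IH cons1 cons2; rewrite eqh in xs1 *; congr rcons.
apply: functional_extensionality => i /=.
case: (eqVneq i s) => [->|ne]; first by rewrite xs1 xs2.
by rewrite /input (negbTE ne).
Qed.

Lemma correct_sender_detectable s : correct P -> (exists m1 m2 : M, m1 <> m2) ->
  exists m k, ~ silent_consistent s (transcript s m k) (key_view s k).
Proof.
move=> [dec decK] [m1 [m2 m12]]; apply: NNPP => undetectable; apply: m12.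
have cons m k : silent_consistent s (transcript s m k) (key_view s k).
  by apply: NNPP => ncons; apply: undetectable; exists m, k.
pose k : keys P := [ffun=> false].
by rewrite -(decK s m1 k) -(decK s m2 k) /transcript (run_silent_consistent_eq (cons m1 k) (cons m2 k)).
Qed.

Definition restrict_view (s : 'I_n) (v : view) : view :=
  [ffun e => if incident (ends P) s e then v e else None].

Lemma restrict_key_view s j k :
  (forall e, incident (ends P) s e -> incident (ends P) j e) ->
  restrict_view s (key_view j k) = key_view s k.
Proof.
move=> dom; apply/ffunP => e; rewrite !ffunE.
have [se|nse] := boolP (incident (ends P) s e).
  by move: se (dom e se); rewrite /incident => -> ->.
by move: nse; rewrite /incident => /negbTE ->.
Qed.

Definition silence_test_guess (s t : 'I_n) (h : history) (v : view) : 'I_n :=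
  if excluded_middle_informative (silent_consistent s h (restrict_view s v))
  then t else s.

Lemma guess_success_gt_inv j m S s t k0 : 1 < n ->
  s != j -> t != j -> s != t ->
  (forall k, S (transcript t m k) (key_view j k) = t) ->
  S (transcript s m k0) (key_view j k0) = s ->
  ((n.-1)%:R^-1 < guess_success (P := P) j m S)%R.
Proof.
move=> n_gt1 sj tj st guess_t guess_s; rewrite /guess_success.
set A := [set sk | _].
have sub : (s, k0) |: [set (t, k) | k : keys P] \subset A.
  apply/subsetP => -[x k]; rewrite !inE => /orP[/eqP[-> ->]|/imsetP[k' _ [-> ->]]] /=.
    by rewrite sj guess_s eqxx.
  by rewrite tj guess_t eqxx.
have cardA : (2 ^ nkeys P).+1 <= #|A|.
  apply: leq_trans (subset_leq_card sub); rewrite cardsU1 card_imset; last by move=> ? ? [].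
  rewrite /keys card_ffun card_bool card_ord -add1n leq_add2r lt0b.
  by apply/imsetP => -[k _ [/eqP]]; rewrite (negbTE st).
have n1_gt0 : (0 < n.-1)%N by lia.
rewrite ltr_pdivlMr ?ltr0n ?muln_gt0 ?n1_gt0 ?expn_gt0 //.
by rewrite natrM mulrA mulVf ?pnatr_eq0 -?lt0n // mul1r ltr_nat.
Qed.

End Protocol.

Theorem mainTheorem4 (n : nat) (M : Type) (P : protocol n M) :
  3 <= n ->
  (exists m1 m2 : M, m1 <> m2) ->
  key_graph_ok P ->
  correct P ->
  sender_anonymous_1 P ->
  n <= nkeys P.
Proof.
move=> n_ge3 two_msgs loopless corr anon; rewrite leqNgt; apply/negP => few_keys.
have [s [j [sj dom]]] := exists_dominated_vertex loopless few_keys (ltnW n_ge3).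
have [t] : exists t, t \notin [set s; j].
  by apply: exists_notin; rewrite cards2 sj card_ord.
rewrite !inE negb_or => /andP[ts tj].
have [m [k0 detect]] := correct_sender_detectable s corr two_msgs.
have [bound _] := anon j m.
have := bound (silence_test_guess s t); apply/negP; rewrite -ltNge.
apply: (guess_success_gt_inv (s := s) (t := t) (k0 := k0)) => //.
- exact: ltnW n_ge3.
- by rewrite eq_sym.
- move=> k; rewrite /silence_test_guess restrict_key_view //.
  case: excluded_middle_informative => // [[]].
  by apply: run_silent_consistent; rewrite eq_sym.
- rewrite /silence_test_guess restrict_key_view //.
  by case: excluded_middle_informative.
Qed.
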